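(* Let $k\ge 2$ be an integer and let $R$ and $B$ be disjoint finite sets of points in the plane such that no three points of $R\cup B$ are collinear. If $2\le |B|\le (k-2)|R|+2$, then there exists a non-crossing geometric spanning tree $T$ on $R\cup B$ such that the set of leaves of $T$ is exactly $B$ and the maximum degree of $T$ is at most $k$. Moreover, if $|B|=(k-2)|R|+2$, then $T$ satisfies $\deg_T(x)=k$ for every $x\in R$.
   Context: A geometric spanning tree on a point set $P$ is a tree with vertex set $P$ whose edges are drawn as straight-line segments between their endpoints; it is non-crossing if no two edges intersect except at a common endpoint. $\deg_T(v)$ denotes the degree of vertex $v$ in $T$, and a leaf is a vertex of degree one. *)

From HB Require Import structures.
From mathcomp Require Import all_boot all_order all_algebra.
From mathcomp Require Import reals.
Set Implicit Arguments. Unset Strict Implicit. Unset Printing Implicit Defensive.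
Import Order.TTheory GRing.Theory Num.Theory.
Local Open Scope ring_scope.

Definition in_segment (R : realType) (a b z : R * R) : Prop :=
  exists t : R, 0 <= t /\ t <= 1 /\
    z = ((1 - t) * a.1 + t * b.1, (1 - t) * a.2 + t * b.2).

Definition collinear (R : realType) (a b c : R * R) : Prop :=
  (b.1 - a.1) * (c.2 - a.2) - (b.2 - a.2) * (c.1 - a.1) = 0.

Definition no_three_collinear (R : realType) (n : nat) (p : 'I_n -> R * R) : Prop :=
  forall i j l : 'I_n, i != j -> j != l -> i != l -> ~ collinear (p i) (p j) (p l).

Definition simple_graph (n : nat) (e : rel 'I_n) : Prop :=
  irreflexive e /\ symmetric e.

Definition connected_graph (n : nat) (e : rel 'I_n) : Prop :=
  forall x y : 'I_n, connect e x y.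

Definition acyclic_graph (n : nat) (e : rel 'I_n) : Prop :=
  forall s : seq 'I_n, uniq s -> (3 <= size s)%N -> ~~ cycle e s.

Definition is_tree (n : nat) (e : rel 'I_n) : Prop :=
  simple_graph e /\ connected_graph e /\ acyclic_graph e.

Definition deg (n : nat) (e : rel 'I_n) (x : 'I_n) : nat := #|[set y | e x y]|.

Definition non_crossing (R : realType) (n : nat) (p : 'I_n -> R * R)
    (e : rel 'I_n) : Prop :=
  forall a b c d : 'I_n, e a b -> e c d ->
    ~ ((a = c /\ b = d) \/ (a = d /\ b = c)) ->
    forall z : R * R, in_segment (p a) (p b) z -> in_segment (p c) (p d) z ->
      exists v : 'I_n, (v = a \/ v = b) /\ (v = c \/ v = d) /\ z = p v.

From HB Require Import structures.
From mathcomp Require Import all_boot all_order all_algebra.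
From mathcomp Require Import reals.
From mathcomp Require Import ring lra zify.
Set Implicit Arguments. Unset Strict Implicit. Unset Printing Implicit Defensive.
Import Order.TTheory GRing.Theory Num.Theory.

(* Blue points get degree 1 and red points degree 2 + g x, with the surplus
   |B| - 2 spread over the reds so that g x <= k - 2; these degrees are
   positive and sum to 2n - 2.  Every such degree sequence on n >= 2 points in
   general position is realized by a non-crossing spanning tree, with any
   prescribed root.  By induction: sort the points by angle around the
   lexicographically smallest one, h.  A discrete intermediate value argument
   on prefix sums of the degrees finds a point r and a vertex c in {h, r} such
   that h, r and the points before r, and c and the points after r, both carry
   tree degree sequences once the degree of c is split between them.  The two
   trees are glued at c and cannot cross, as the line h r separates them. *)

Section Sequences.
Variable T : Type.
Implicit Types (s : seq T) (F : T -> nat).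

Lemma pairwise_rev (r : rel T) s :
  pairwise r (rev s) = pairwise (fun x y => r y x) s.
Proof. by elim: s => //= x s IH; rewrite rev_cons pairwise_rcons all_rev IH. Qed.

Definition psum F s i := \sum_(x <- take i s) F x.

Lemma psum0 F s : psum F s 0 = 0.
Proof. by rewrite /psum take0 big_nil. Qed.

Lemma psumS F x0 s i : i < size s -> psum F s i.+1 = psum F s i + F (nth x0 s i).
Proof. by move=> lt_is; rewrite /psum (take_nth x0 lt_is) -cats1 big_cat big_seq1. Qed.

Lemma psum_size F s : psum F s (size s) = \sum_(x <- s) F x.
Proof. by rewrite /psum take_size. Qed.
End Sequences.

Section EqSequences.
Variable T : eqType.
Implicit Types (s X Y : seq T) (F g : T -> nat).

Lemma pairwise_pivot (r : rel T) X a Y : pairwise r (X ++ a :: Y) ->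
  {in X, forall x, r x a} /\ {in Y, forall y, r a y}.
Proof.
rewrite pairwise_cat pairwise_cons => /and3P[/allrelP rXaY _ /andP[/allP raY _]].
by split=> // x xX; apply: rXaY; rewrite ?inE ?eqxx.
Qed.

Lemma sum_update s F c v : c \in s -> uniq s ->
  \sum_(x <- s) [eta F with c |-> v] x + F c = \sum_(x <- s) F x + v.
Proof.
move=> cs us; rewrite !(bigD1_seq c cs us) /= eqxx.
by rewrite (eq_bigr F) => [|x /negbTE -> //]; lia.
Qed.

Lemma bounded_summands_exist s c m : uniq s -> m <= c * size s ->
  exists g, (forall x, g x <= c) /\ \sum_(x <- s) g x = m.
Proof.
elim: s m => [|a s IH] m /=.
  by rewrite muln0 leqn0 => _ /eqP->; exists (fun=> 0); rewrite big_nil.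
case/andP=> a_s us le_m.
have le_m' : m - minn c m <= c * size s by rewrite mulnS in le_m; lia.
have [g [gc gs]] := IH _ us le_m'.
exists [eta g with a |-> minn c m]; split=> [x /=|].
  by case: (x == a); rewrite ?geq_minl.
rewrite big_cons /= eqxx (eq_big_seq g) ?gs; first lia.
by move=> x xs; case: eqP => // xa; rewrite -xa xs in a_s.
Qed.

Lemma bounded_summands_eq s c g : (forall x, g x <= c) ->
  \sum_(x <- s) g x = c * size s -> {in s, forall x, g x = c}.
Proof.
move=> gc; elim: s => [|a s IH] //=; rewrite big_cons mulnS => sum_eq x.
have le_s : \sum_(x <- s) g x <= c * size s.
  by rewrite -sum1_size big_distrr /= leq_sum // => y _; rewrite muln1.
by have := gc a; rewrite inE => ga /orP[/eqP->|/IH->] //; lia.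
Qed.
End EqSequences.

Section DiscreteCrossings.
Variable D : nat -> nat.
Hypothesis D0 : D 0 = 0.

Lemma increasing_hits_double_pred m : (forall i, i < m -> D i < D i.+1) ->
  D m + 2 <= 2 * m -> exists2 i, 0 < i < m & D i + 1 = 2 * i.
Proof.
move=> Dinc Dm.
have : exists i, D i + 1 <= 2 * i by exists m; lia.
case/ex_minnP=> [[|i]]; first by rewrite D0.
move=> Di1 imin; have le_im : i < m by apply: imin; lia.
have Di : 2 * i <= D i by have := imin i; lia.
have := Dinc i le_im; exists i.+1; last lia.
rewrite /= ltn_neqAle le_im andbT; apply/eqP=> eq_im; rewrite -eq_im in Dm; lia.
Qed.

Lemma crosses_double_or_last_jump m : 2 <= m -> D m + 1 = 2 * m ->
  (exists j, [/\ j.+1 < m, D j <= 2 * j & 2 * j.+1 <= D j.+1])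
  \/ D m.-1 + 2 <= D m.
Proof.
move=> m2 Dm; case: (leqP (D m.-1 + 2) (D m)) => [|lt_jump]; [by right | left].
have : exists i, (0 < i) && (2 * i <= D i) by exists m.-1; apply/andP; split; lia.
case/ex_minnP=> [[|j]] // /andP[_ Dj1] jmin.
have lt_jm : j.+1 <= m.-1 by apply: jmin; apply/andP; split; lia.
exists j; split=> //; first lia.
case: j Dj1 jmin {lt_jm} => [|j] Dj1 jmin; first by rewrite D0.
by have := jmin j.+1; lia.
Qed.
End DiscreteCrossings.

Section Plane.
Local Open Scope ring_scope.
Variable R : realType.
Implicit Types (a b c h z : R * R) (f : R * R -> R).

(* [collinear a b c] unfolds to [orient a b c = 0]. *)
Definition orient a b c : R :=
  (b.1 - a.1) * (c.2 - a.2) - (b.2 - a.2) * (c.1 - a.1).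

Lemma orient_swap h a b : orient h b a = - orient h a b.
Proof. rewrite /orient; ring. Qed.

Lemma orient_aba a b : orient a b a = 0.
Proof. rewrite /orient; ring. Qed.

Lemma orient_abb a b : orient a b b = 0.
Proof. rewrite /orient; ring. Qed.

Lemma lexi_ltE a b : ((a : R *l R) < b)%O = (a.1 < b.1) || (a.1 == b.1) && (a.2 < b.2).
Proof. by rewrite ltEprodlexi; case: (ltgtP a.1 b.1). Qed.

(* The points lexicographically after [h] lie in a half-plane bounded by a line
   through [h], where the orientation seen from [h] is an order. *)
Lemma orient_trans h a b c :
  ((h : R *l R) < a)%O -> ((h : R *l R) < b)%O -> ((h : R *l R) < c)%O ->
  0 < orient h a b -> 0 < orient h b c -> 0 < orient h a c.
Proof.
rewrite !lexi_ltE /orient.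
case: h a b c => [h1 h2] [a1 a2] [b1 b2] [c1 c2] /=.
by case/orP=> [Ha|/andP[/eqP Ha Ha']]; case/orP=> [Hb|/andP[/eqP Hb Hb']];
   case/orP=> [Hc|/andP[/eqP Hc Hc']] Hab Hbc; nra.
Qed.

Definition affine f := forall a b t,
  f ((1 - t) * a.1 + t * b.1, (1 - t) * a.2 + t * b.2) = (1 - t) * f a + t * f b.

Lemma affine_orient (s : R) a b : affine (fun z => s * orient a b z).
Proof. by move=> u v t; rewrite /orient /=; ring. Qed.

Lemma affine_segment_le0 f a b z : affine f -> 0 <= f a -> 0 <= f b ->
  in_segment a b z -> f z <= 0 ->
  [\/ z = a /\ f a = 0, z = b /\ f b = 0 | f a = 0 /\ f b = 0].
Proof.
move=> aff fa fb [t [t0 [t1 ->]]]; rewrite aff => fz.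
have [t_eq0|t_neq0] := eqVneq t 0.
  constructor 1; split; last by rewrite t_eq0 in fz; lra.
  by rewrite t_eq0; case: a {fa fz} => ??; congr pair => /=; ring.
have [t_eq1|t_neq1] := eqVneq t 1.
  constructor 2; split; last by rewrite t_eq1 in fz; lra.
  by rewrite t_eq1; case: b {fb fz} => ??; congr pair => /=; ring.
have t_gt0 : 0 < t by rewrite lt_def t_neq0.
have t_lt1 : t < 1 by rewrite lt_def eq_sym t_neq1.
by constructor 3; split; nra.
Qed.
End Plane.

Section PointSet.
Local Open Scope ring_scope.
Variables (R : realType) (n : nat) (p : 'I_n -> R * R).
Hypothesis p_inj : injective p.
Hypothesis p_gen : no_three_collinear p.

Lemma orient_neq0 i j l : i != j -> j != l -> i != l -> orient (p i) (p j) (p l) != 0.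
Proof. by move=> ij jl il; apply/eqP; apply: p_gen ij jl il. Qed.

Lemma in_segment_vertex i j l : in_segment (p i) (p j) (p l) -> l = i \/ l = j.
Proof.
case=> t [_ [_ pl]].
have [ji|ij] := eqVneq i j.
  by left; apply: p_inj; rewrite pl -ji; case: (p i) => ??; congr pair => /=; ring.
have [<-|li] := eqVneq i l; first by left.
have [<-|lj] := eqVneq j l; first by right.
have /eqP[] := orient_neq0 ij lj li.
rewrite pl /orient /=; ring.
Qed.

Definition line_separates (S1 S2 : seq 'I_n) (c : 'I_n) :=
  exists f : R * R -> R, [/\ affine f, {in S1, forall x, f (p x) <= 0},
    {in S2, forall x, 0 <= f (p x)} & {in S2, forall x, f (p x) = 0 -> x = c}].

Lemma line_separates_cross S1 S2 c a b u v z : line_separates S1 S2 c ->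
  a \in S2 -> b \in S2 -> a != b -> u \in S1 -> v \in S1 ->
  in_segment (p a) (p b) z -> in_segment (p u) (p v) z ->
  [/\ z = p c, c = a \/ c = b & c = u \/ c = v].
Proof.
case=> f [aff f1 f2 f2c] aS bS ab uS vS zab zuv.
have fz : f z <= 0.
  case: zuv => t [t0 [t1 ->]]; rewrite aff.
  by have := f1 u uS; have := f1 v vS; nra.
have [zc cab] : z = p c /\ (c = a \/ c = b).
  case: (affine_segment_le0 aff (f2 a aS) (f2 b bS) zab fz).
  - by case=> -> /(f2c a aS) ->; split; [|left].
  - by case=> -> /(f2c b bS) ->; split; [|right].
  by case=> /(f2c a aS) ca /(f2c b bS) cb; case/eqP: ab; rewrite ca cb.
by split=> //; apply: in_segment_vertex; rewrite -zc.
Qed.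
End PointSet.

Section RootedTrees.
Variable n : nat.
Implicit Types (S : seq 'I_n) (e : rel 'I_n) (rho c : 'I_n) (par : 'I_n -> 'I_n).

Definition parent_arc S rho par : rel 'I_n :=
  fun x y => [&& x \in S, x != rho & par x == y].

Definition parent_edge S rho par : rel 'I_n :=
  fun x y => parent_arc S rho par x y || parent_arc S rho par y x.

Definition rooted_tree S rho e := rho \in S /\
  exists par (depth : 'I_n -> nat),
    {in S, forall x, x != rho -> par x \in S /\ depth (par x) < depth x}
    /\ e =2 parent_edge S rho par.

Lemma rooted_tree_mem S rho e x y : rooted_tree S rho e -> e x y -> x \in S /\ y \in S.
Proof.
case=> _ [par [depth [Hpar ->]]].
by case/orP=> /and3P[zS zr /eqP <-]; have [] := Hpar _ zS zr.
Qed.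

Lemma rooted_tree_irr S rho e : rooted_tree S rho e -> irreflexive e.
Proof.
case=> _ [par [depth [Hpar E]]] x; rewrite E /parent_edge orbb.
apply/negP=> /and3P[xS xr /eqP px].
by have [_] := Hpar x xS xr; rewrite px ltnn.
Qed.

Lemma rooted_tree_sym S rho e : rooted_tree S rho e -> symmetric e.
Proof. by case=> _ [par [depth [_ E]]] x y; rewrite !E /parent_edge orbC. Qed.

Lemma rooted_tree_eq S S' rho e e' :
  S =i S' -> e =2 e' -> rooted_tree S rho e -> rooted_tree S' rho e'.
Proof.
move=> eqS eqe [rS [par [depth [Hpar E]]]]; split; first by rewrite -eqS.
exists par, depth; split; first by move=> x; rewrite -!eqS; apply: Hpar.
by move=> x y; rewrite -eqe E /parent_edge /parent_arc !eqS.
Qed.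

Lemma rooted_tree_union S1 S2 rho c e1 e2 :
  rooted_tree S1 rho e1 -> rooted_tree S2 c e2 -> c \in S1 ->
  {in S1, forall x, x \in S2 -> x = c} ->
  rooted_tree (S1 ++ S2) rho (fun x y => e1 x y || e2 x y).
Proof.
move=> [rS1 [par1 [dep1 [H1 E1]]]] [cS2 [par2 [dep2 [H2 E2]]]] cS1 S12c.
pose par x := if x \in S1 then par1 x else par2 x.
pose depth x := if x \in S1 then dep1 x else (dep1 c + dep2 x).+1.
have outS1 x : x \notin S1 -> (x != rho) && (x != c).
  by move=> xS1; apply/andP; split; apply: contraNneq xS1 => ->.
have arcE x y : parent_arc (S1 ++ S2) rho par x y =
    parent_arc S1 rho par1 x y || parent_arc S2 c par2 x y.
  rewrite /parent_arc mem_cat /par; case: ifP => [xS1|/negbT xS1] /=.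
    by case: (boolP (x \in S2)) => [/(S12c x xS1)->|]; rewrite ?eqxx ?andbF ?orbF.
  by case/andP: (outS1 x xS1) => -> ->.
split; first by rewrite mem_cat rS1.
exists par, depth; split; last first.
  by move=> x y; rewrite E1 E2 /parent_edge !arcE orbACA.
move=> x; rewrite mem_cat /par /depth; case: ifP => [xS1 _ xr|/negbT xS1 /= xS2 _].
  by have [pS ?] := H1 x xS1 xr; rewrite mem_cat pS.
have /andP[_ xc] := outS1 x xS1.
have [pS dp] := H2 x xS2 xc; rewrite mem_cat pS orbT; split=> //.
by case: ifP => [/S12c /(_ pS) ->|_]; rewrite ltnS ?leq_addr ?ltn_add2l.
Qed.

Lemma rooted_tree_spanning S rho e :
  rooted_tree S rho e -> (forall x, x \in S) -> is_tree e.
Proof.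
move=> T allS; have irr := rooted_tree_irr T; have sym := rooted_tree_sym T.
case: T => _ [par [depth [Hpar E]]].
have parE x : x != rho -> e x (par x).
  by move=> xr; rewrite E /parent_edge /parent_arc allS xr eqxx.
have edge_up x y : e x y -> depth y <= depth x -> y = par x.
  rewrite E => /orP[/and3P[_ _ /eqP //]|/and3P[yS yr /eqP pyx]] le_yx.
  by have [_] := Hpar y yS yr; rewrite pyx ltnNge le_yx.
split=> //; split.
  have to_root x : connect e x rho.
    elim: {x}(depth x).+1 {-2}x (ltnSn (depth x)) => // m IH x ltxm.
    have [->|xr] := eqVneq x rho; first exact: connect0.
    apply: connect_trans (connect1 (parE x xr)) (IH _ _).
    by have [_ /leq_trans] := Hpar x (allS x) xr; apply.
  by move=> x y; rewrite (connect_trans (to_root x)) // (sym_connect_sym sym) to_root.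
(* The deepest vertex of a cycle would have both cycle neighbours as parent. *)
move=> [//|z0 s0] us ss; apply/negP=> cs.
have [x xs xmax] := @arg_maxnP _ z0 (mem (z0 :: s0)) depth (mem_head _ _).
case: (rot_to xs) => i s1 Er.
have : uniq (x :: s1) /\ cycle e (x :: s1) /\ 3 <= size (x :: s1).
  by rewrite -Er rot_uniq rot_cycle size_rot.
have {}xmax y : y \in x :: s1 -> depth y <= depth x by rewrite -Er mem_rot => /xmax.
case: s1 Er xmax => [|a [|b t]] _ xmax [ux [cx //]].
move: cx; rewrite /= rcons_path => /and4P[exa _ _ ezx].
have zbt : last b t \in b :: t by apply: mem_last.
have a_par : a = par x by apply: edge_up exa (xmax _ _); rewrite !inE eqxx orbT.
have z_par : last b t = par x.
  by apply: edge_up; [rewrite sym | apply: xmax; rewrite 2!in_cons zbt !orbT].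
by move: ux; rewrite /= a_par -z_par zbt !andbF.
Qed.

Lemma deg_orE e1 e2 x : (forall y, ~~ (e1 x y && e2 x y)) ->
  deg (fun x y => e1 x y || e2 x y) x = deg e1 x + deg e2 x.
Proof.
move=> disj; rewrite /deg -cardsUI.
have -> : [set y | e1 x y] :&: [set y | e2 x y] = set0.
  by apply/setP=> y; rewrite !inE (negbTE (disj y)).
by rewrite cards0 addn0; apply: eq_card => y; rewrite !inE.
Qed.

Lemma deg_eq0 e x : (forall y, ~~ e x y) -> deg e x = 0.
Proof.
move=> noe; apply/eqP; rewrite cards_eq0; apply/eqP/setP=> y.
by rewrite !inE (negbTE (noe y)).
Qed.

Lemma eq_deg e e' : e =2 e' -> deg e =1 deg e'.
Proof. by move=> E x; apply: eq_card => y; rewrite !inE E. Qed.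
End RootedTrees.

Section Realizations.
Variables (R : realType) (n : nat) (p : 'I_n -> R * R).
Hypothesis p_inj : injective p.
Hypothesis p_gen : no_three_collinear p.
Implicit Types (S : seq 'I_n) (d : 'I_n -> nat) (e : rel 'I_n).

Definition realizes S d rho e :=
  [/\ rooted_tree S rho e, non_crossing p e & {in S, forall x, deg e x = d x}].

(* The root is arbitrary so that a second tree can be rooted at the gluing vertex. *)
Definition realizable S d := forall rho, rho \in S -> exists e, realizes S d rho e.

Lemma non_crossing_eq e e' : e =2 e' -> non_crossing p e -> non_crossing p e'.
Proof. by move=> E N a b c d'; rewrite -!E; apply: N. Qed.

Lemma realizes_eq S S' d rho e e' :
  S =i S' -> e =2 e' -> realizes S d rho e -> realizes S' d rho e'.
Proof.
move=> eqS E [T N D]; split; first exact: rooted_tree_eq T.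
  exact: non_crossing_eq N.
by move=> x; rewrite -eqS -(eq_deg E); apply: D.
Qed.

Lemma realizable_ext S S' d : S =i S' -> realizable S d -> realizable S' d.
Proof.
by move=> eqS RS rho; rewrite -eqS => /RS[e G]; exists e; apply: realizes_eq G.
Qed.

Lemma non_crossing_union S1 S2 rho1 rho2 c e1 e2 :
  rooted_tree S1 rho1 e1 -> rooted_tree S2 rho2 e2 ->
  non_crossing p e1 -> non_crossing p e2 -> line_separates p S1 S2 c ->
  non_crossing p (fun x y => e1 x y || e2 x y).
Proof.
move=> T1 T2 N1 N2 sep.
have cross a b u v z : e2 a b -> e1 u v ->
    in_segment (p a) (p b) z -> in_segment (p u) (p v) z ->
    exists w, (w = a \/ w = b) /\ (w = u \/ w = v) /\ z = p w.
  move=> ab uv zab zuv; have [aS bS] := rooted_tree_mem T2 ab.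
  have [uS vS] := rooted_tree_mem T1 uv.
  have neq_ab : a != b by apply: contraTneq ab => ->; rewrite (rooted_tree_irr T2).
  have [-> ? ?] := line_separates_cross p_inj p_gen sep aS bS neq_ab uS vS zab zuv.
  by exists c.
move=> a b u v /orP[ab|ab] /orP[uv|uv] neq z zab zuv.
- exact: N1 ab uv neq z zab zuv.
- by have [w [? [? ?]]] := cross u v a b z uv ab zuv zab; exists w.
- exact: cross ab uv zab zuv.
- exact: N2 ab uv neq z zab zuv.
Qed.

Lemma realizes_glue S1 S2 c rho d1 d2 d e1 e2 :
  realizes S1 d1 rho e1 -> realizes S2 d2 c e2 -> c \in S1 ->
  {in S1, forall x, x \in S2 -> x = c} ->
  non_crossing p (fun x y => e1 x y || e2 x y) ->
  {in S1, forall x, x != c -> d x = d1 x} ->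
  {in S2, forall x, x != c -> d x = d2 x} -> d c = d1 c + d2 c ->
  realizes (S1 ++ S2) d rho (fun x y => e1 x y || e2 x y).
Proof.
move=> [T1 _ D1] [T2 _ D2] cS1 S12c N dd1 dd2 ddc.
split=> //; first exact: rooted_tree_union T1 T2 cS1 S12c.
have deg1 x : x \notin S1 -> deg e1 x = 0.
  by move=> xS1; apply: deg_eq0 => y; apply: contra xS1 => /(rooted_tree_mem T1)[].
have deg2 x : x \notin S2 -> deg e2 x = 0.
  by move=> xS2; apply: deg_eq0 => y; apply: contra xS2 => /(rooted_tree_mem T2)[].
move=> x xS; rewrite deg_orE; last first.
  move=> y; apply/negP=> /andP[e1xy e2xy].
  have [xS1 yS1] := rooted_tree_mem T1 e1xy; have [xS2 yS2] := rooted_tree_mem T2 e2xy.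
  by move: e2xy; rewrite (S12c x xS1 xS2) (S12c y yS1 yS2) (rooted_tree_irr T2).
have [->|xc] := eqVneq x c; first by rewrite D1 // D2 //; case: T2.
move: xS; rewrite mem_cat => /orP[xS1|xS2].
  rewrite D1 // deg2 ?addn0 ?dd1 //.
  by apply: contra xc => /(S12c x xS1) ->.
rewrite D2 // deg1 ?dd2 //.
by apply: contra xc => xS1; rewrite (S12c x xS1 xS2).
Qed.

Lemma realizable_glue S1 S2 c d1 d2 d :
  realizable S1 d1 -> realizable S2 d2 -> c \in S1 -> c \in S2 ->
  {in S1, forall x, x \in S2 -> x = c} -> line_separates p S1 S2 c ->
  {in S1, forall x, x != c -> d x = d1 x} ->
  {in S2, forall x, x != c -> d x = d2 x} -> d c = d1 c + d2 c ->
  realizable (S1 ++ S2) d.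
Proof.
move=> R1 R2 cS1 cS2 S12c sep dd1 dd2 ddc rho; rewrite mem_cat => /orP[rS1|rS2].
  have [e1 G1] := R1 rho rS1; have [e2 G2] := R2 c cS2.
  exists (fun x y => e1 x y || e2 x y); apply: (realizes_glue G1 G2 cS1 S12c _ dd1 dd2 ddc).
  by case: G1 G2 => [T1 N1 _] [T2 N2 _]; apply: non_crossing_union T1 T2 N1 N2 sep.
have [e2 G2] := R2 rho rS2; have [e1 G1] := R1 c cS1.
have N : non_crossing p (fun x y => e2 x y || e1 x y).
  case: G1 G2 => [T1 N1 _] [T2 N2 _].
  by apply: non_crossing_eq (non_crossing_union T1 T2 N1 N2 sep) => x y; rewrite orbC.
have S21c : {in S2, forall x, x \in S1 -> x = c} by move=> x xS2 xS1; apply: S12c.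
exists (fun x y => e1 x y || e2 x y).
apply: realizes_eq (realizes_glue G2 G1 cS2 S21c N dd2 dd1 _).
- by move=> x; rewrite !mem_cat orbC.
- by move=> x y; rewrite orbC.
- by rewrite addnC.
Qed.

Lemma realizes_pair a b d : a != b -> d a = 1 -> d b = 1 ->
  exists e, realizes [:: a; b] d a e.
Proof.
move=> ab da db; pose e := parent_edge [:: a; b] a (fun=> a).
have arcE x y : parent_arc [:: a; b] a (fun=> a) x y = (x == b) && (a == y).
  by rewrite /parent_arc !inE; case: (eqVneq x a) => [->|]; rewrite ?(negbTE ab).
exists e; split.
- split; first by rewrite inE eqxx.
  exists (fun=> a), (fun x => nat_of_bool (x != a)); split=> // x _ xa.
  by rewrite inE eqxx xa.
- move=> x y u v; rewrite /e /parent_edge !arcE => exy euv [].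
  by move: exy euv => /orP[]/andP[/eqP-> /eqP<-] /orP[]/andP[/eqP-> /eqP<-]; auto.
move=> x; rewrite !inE => /orP[]/eqP->; [rewrite da -(cards1 b) | rewrite db -(cards1 a)];
  apply: eq_card => y; rewrite !inE /e /parent_edge !arcE eqxx (negbTE ab) ?andbT //.
by rewrite andbF orbF eq_sym.
Qed.

Lemma realizable_pair a b d : a != b -> d a = 1 -> d b = 1 -> realizable [:: a; b] d.
Proof.
move=> ab da db rho; rewrite !inE => /orP[]/eqP->; first exact: realizes_pair.
have [e G] : exists e, realizes [:: b; a] d b e by apply: realizes_pair; rewrite 1?eq_sym.
by exists e; apply: realizes_eq G => // x; rewrite !inE orbC.
Qed.
End Realizations.

Section AngularOrder.
Local Open Scope ring_scope.
Variables (R : realType) (n : nat) (p : 'I_n -> R * R).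
Hypothesis p_inj : injective p.
Hypothesis p_gen : no_three_collinear p.

(* [angle_lt 1 h] orders points counter-clockwise around [h], [angle_lt (-1) h]
   clockwise. *)
Definition angle_lt (s : R) (h : 'I_n) : rel 'I_n :=
  fun a b => 0 < s * orient (p h) (p a) (p b).

Lemma angular_order S : uniq S -> S != [::] ->
  exists h t, perm_eq S (h :: t) /\ pairwise (angle_lt 1 h) t.
Proof.
case: S => [//|i0 S0] uS _; set S := i0 :: S0.
case: (@arg_minP _ (R *l R) _ i0 [in S] (fun i => p i : R *l R) (mem_head _ _)).
move=> h hS hmin.
have lex_after q : q \in S -> q != h -> ((p h : R *l R) < p q)%O.
  move=> qS qh; rewrite lt_neqAle hmin // andbT.
  by apply: contra qh => /eqP/p_inj->.
pose le a b := 0 <= orient (p h) (p a) (p b).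
pose t := sort le (rem h S).
have St : perm_eq S (h :: t).
  by apply: perm_trans (perm_to_rem hS) _; rewrite perm_cons perm_sym perm_sort.
exists h, t; split=> //.
have /andP[ht ut] : uniq (h :: t) by rewrite -(perm_uniq St).
have tS x : x \in t -> x \in S /\ x != h.
  by move=> xt; rewrite (perm_mem St) inE xt orbT; split=> //; apply: contraNneq ht => <-.
have nz a b : a \in t -> b \in t -> a != b -> orient (p h) (p a) (p b) != 0.
  by move=> /tS[_ ah] /tS[_ bh] ab; apply: orient_neq0; rewrite // eq_sym.
have leE a b : a \in t -> b \in t -> a != b -> le a b = angle_lt 1 h a b.
  move=> at' bt ab; rewrite /le /angle_lt mul1r le_eqVlt eq_sym.
  by rewrite (negbTE (nz a b at' bt ab)).
have le_tr : {in t & &, transitive le}.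
  move=> b a c bt at' ct.
  have [<-|ac] := eqVneq a c; first by rewrite /le orient_abb.
  have [<-|ab] := eqVneq a b; first by [].
  have [<-|bc] := eqVneq b c; first by [].
  rewrite !leE // /angle_lt !mul1r.
  have [aS ah] := tS a at'; have [bS bh] := tS b bt; have [cS ch] := tS c ct.
  by move=> oab obc; apply: orient_trans oab obc; apply: lex_after.
have ple : pairwise le t.
  rewrite -(sorted_pairwise_in le_tr (allss t)) sort_sorted // => a b.
  by rewrite /le orient_swap oppr_ge0 le_total.
have : pairwise [rel a b | le a b && (a != b)] t by rewrite pairwise_relI ple -uniq_pairwise.
by apply: sub_in_pairwise (allss t) => a b at' bt /andP[lab ab]; rewrite -leE.
Qed.

Lemma line_separates_fan h X r Y s c :
  {in X, forall x, angle_lt s h x r} -> {in Y, forall y, angle_lt s h r y} ->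
  c \in [:: h; r] -> line_separates p (h :: r :: X) (c :: Y) c.
Proof.
move=> HX HY cS; have c0 : orient (p h) (p r) (p c) = 0.
  by move: cS; rewrite !inE => /orP[]/eqP->; rewrite ?orient_aba ?orient_abb.
exists (fun z => s * orient (p h) (p r) z); split.
- exact: affine_orient.
- move=> x; rewrite !inE => /or3P[/eqP->|/eqP->|xX];
    rewrite ?orient_aba ?orient_abb ?mulr0 //.
  by rewrite orient_swap mulrN oppr_le0; apply/ltW/HX.
- by move=> x; rewrite inE => /orP[/eqP->|/HY/ltW //]; rewrite c0 mulr0.
move=> x; rewrite inE => /orP[/eqP-> //|/HY + f0].
by rewrite /angle_lt f0 ltxx.
Qed.
End AngularOrder.

Section DegreeSequences.
Variables (R : realType) (n : nat) (p : 'I_n -> R * R).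
Hypothesis p_inj : injective p.
Hypothesis p_gen : no_three_collinear p.
Implicit Types (S t X Y : seq 'I_n) (h r c : 'I_n) (d : 'I_n -> nat).

Section Split.
Variable N : nat.
Hypothesis IH : forall S d, uniq S -> 2 <= size S <= N ->
  {in S, forall x, 0 < d x} -> \sum_(x <- S) d x + 2 = 2 * size S ->
  realizable p S d.

(* The line [h r] separates [h :: r :: X] from [c :: Y]; the gluing vertex [c]
   gets degree [v] in the first part and [d c - v] in the second. *)
Lemma realizable_fan h X r Y s c v d :
  size X + size Y < N -> uniq (h :: X ++ r :: Y) ->
  {in X, forall x, angle_lt p s h x r} -> {in Y, forall y, angle_lt p s h r y} ->
  Y != [::] -> c \in [:: h; r] -> 0 < v < d c ->
  {in h :: X ++ r :: Y, forall x, 0 < d x} ->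
  \sum_(x <- h :: X ++ r :: Y) d x + 2 = 2 * (size X + size Y).+2 ->
  \sum_(x <- h :: r :: X) d x + v = 2 * (size X).+1 + d c ->
  realizable p (h :: X ++ r :: Y) d.
Proof.
move=> le_XYN uS HX HY Y0 cS /andP[v0 lt_v] dpos dsum sum1.
have Y1 : 0 < size Y by rewrite lt0n size_eq0.
have XrY : perm_eq (h :: X ++ r :: Y) ((h :: r :: X) ++ Y).
  by rewrite perm_cons (perm_catCA X [:: r] Y).
have memS x : (x \in h :: X ++ r :: Y) = (x \in h :: r :: X) || (x \in Y).
  by rewrite (perm_mem XrY) mem_cat.
have /and3P[U1 disj UY] : [&& uniq (h :: r :: X), ~~ has (mem (h :: r :: X)) Y & uniq Y].
  by rewrite -cat_uniq -(perm_uniq XrY).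
have cS1 : c \in h :: r :: X by move: cS; rewrite !inE => /orP[]->; rewrite ?orbT.
have cY : c \notin Y by apply: contra disj => cY; apply/hasP; exists c.
have S12c : {in h :: r :: X, forall x, x \in c :: Y -> x = c}.
  move=> x xS1; rewrite inE => /orP[/eqP //|xY].
  by case/negP: disj; apply/hasP; exists x.
have R1 : realizable p (h :: r :: X) [eta d with c |-> v].
  apply: IH => //=; first lia.
  - by move=> x xS1; case: eqP => // _; apply: dpos; rewrite memS xS1.
  - by have := sum_update d v cS1 U1; rewrite /=; lia.
have R2 : realizable p (c :: Y) [eta d with c |-> d c - v].
  apply: IH => /=; first by rewrite cY.
  - lia.
  - move=> x; rewrite inE; case: eqP => [_ _|_ /= xY]; first by rewrite subn_gt0.
    by apply: dpos; rewrite memS xY orbT.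
  - have := sum_update d (d c - v) (mem_head c Y) (_ : uniq (c :: Y)).
    rewrite /= cY UY [\sum_(x <- c :: Y) d x]big_cons => /(_ isT).
    by move: dsum; rewrite (perm_big _ XrY) big_cat /=; lia.
have sep := line_separates_fan HX HY cS.
apply: realizable_ext _ (realizable_glue p_inj p_gen R1 R2 cS1 (mem_head _ _) S12c sep _ _ _).
- move=> x; rewrite mem_cat memS (in_cons c); case: (eqVneq x c) => [->|_] //=.
  by rewrite cS1.
- by move=> x _ /negbTE /= ->.
- by move=> x _ /negbTE /= ->.
by rewrite /= eqxx subnKC // ltnW.
Qed.

Lemma realizable_fan_split h t s i c v d :
  size t <= N -> uniq (h :: t) -> pairwise (angle_lt p s h) t ->
  i.+1 < size t -> c \in [:: h; nth h t i] -> 0 < v < d c ->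
  {in h :: t, forall x, 0 < d x} ->
  \sum_(x <- h :: t) d x + 2 = 2 * (size t).+1 ->
  d h + psum d t i.+1 + v = 2 * i.+1 + d c ->
  realizable p (h :: t) d.
Proof.
move=> le_tN uht angt lt_it cS v_dc dpos dsum dsum1.
rewrite (psumS _ h (ltnW lt_it)) /psum in dsum1.
set r := nth h t i in cS dsum1; set X := take i t in dsum1; set Y := drop i.+1 t.
have Et : t = X ++ r :: Y by rewrite /X /r /Y -drop_nth ?cat_take_drop // ltnW.
have sX : size X = i by rewrite /X size_takel //; lia.
have sY : size Y = size t - i.+1 by rewrite /Y size_drop.
have [HX HY] : {in X, forall x, angle_lt p s h x r} /\ {in Y, forall y, angle_lt p s h r y}.
  by apply: pairwise_pivot; rewrite -Et.
rewrite Et in uht dpos dsum *; apply: realizable_fan HX HY _ cS v_dc dpos _ _ => //.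
- by rewrite sX sY; lia.
- by rewrite -size_eq0 sY; lia.
- by move: dsum; rewrite size_cat /=; lia.
by rewrite !big_cons sX; lia.
Qed.

Lemma realizable_fan_apex h t d :
  size t <= N -> uniq (h :: t) -> pairwise (angle_lt p 1 h) t -> 2 <= d h ->
  {in h :: t, forall x, 0 < d x} -> \sum_(x <- h :: t) d x + 2 = 2 * (size t).+1 ->
  realizable p (h :: t) d.
Proof.
move=> le_tN uht angt dh2 dpos dsum.
have Dinc i : i < size t -> psum d t i < psum d t i.+1.
  by move=> it; rewrite (psumS _ h) // -addn1 leq_add2l dpos // inE mem_nth ?orbT.
have Dle : psum d t (size t) + 2 <= 2 * size t.
  by move: dsum; rewrite big_cons -psum_size; lia.
have [[|i] // /andP[_ lt_it] Di] := increasing_hits_double_pred (psum0 d t) Dinc Dle.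
apply: (realizable_fan_split (s := 1) (i := i) (c := h) (v := 1)) => //.
- by rewrite inE eqxx.
- lia.
Qed.

Lemma realizable_fan_leaf h t d :
  size t <= N -> 2 <= size t -> uniq (h :: t) -> pairwise (angle_lt p 1 h) t ->
  d h = 1 -> {in h :: t, forall x, 0 < d x} ->
  \sum_(x <- h :: t) d x + 2 = 2 * (size t).+1 ->
  realizable p (h :: t) d.
Proof.
move=> le_tN t2 uht angt dh dpos dsum.
have Deq : psum d t (size t) + 1 = 2 * size t.
  by move: dsum; rewrite big_cons -psum_size; lia.
have [[j [lt_jt Dj Dj1]]|jump] := crosses_double_or_last_jump (psum0 d t) t2 Deq.
  have DSj := psumS d h (ltnW lt_jt).
  apply: (realizable_fan_split (s := 1) (i := j) (c := nth h t j)
                               (v := (2 * j).+1 - psum d t j)) => //.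
  - by rewrite !inE eqxx orbT.
  - by apply/andP; split; lia.
  - lia.
(* The last point [r] in counter-clockwise order has degree at least 2: read
   [t] clockwise, so that [r] comes first, and split off the edge [h r]. *)
have dlast : 2 <= d (nth h (rev t) 0).
  have lt_mt : (size t).-1 < size t by rewrite ltn_predL; lia.
  by have := psumS d h lt_mt; rewrite prednK ?nth_rev ?subn1; lia.
suff: realizable p (h :: rev t) d by apply: realizable_ext => x; rewrite !inE mem_rev.
apply: (realizable_fan_split (s := -1) (i := 0) (c := nth h (rev t) 0) (v := 1)).
- by rewrite size_rev.
- by rewrite /= mem_rev rev_uniq.
- rewrite pairwise_rev; apply: sub_pairwise angt => a b.
  by rewrite /angle_lt orient_swap mul1r mulN1r.
- by rewrite size_rev.
- by rewrite !inE eqxx orbT.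
- by rewrite dlast.
- by move=> x xS; apply: dpos; move: xS; rewrite !inE mem_rev.
- by move: dsum; rewrite !big_cons big_rev size_rev.
by rewrite (psumS _ h) ?psum0 ?dh ?size_rev; lia.
Qed.
End Split.

Theorem realizable_degrees S d : uniq S -> 2 <= size S ->
  {in S, forall x, 0 < d x} -> \sum_(x <- S) d x + 2 = 2 * size S ->
  realizable p S d.
Proof.
have [N] := ubnP (size S); elim: N S d => // N IH S d.
rewrite ltnS => le_SN uS S2 dpos dsum.
case: (leqP (size S) 2) => [le_S2|gt_S2].
  case: S {le_SN} uS S2 le_S2 dpos dsum => [|a [|b [|]]] //= /andP[].
  rewrite inE => ab _ _ _ dpos.
  rewrite !big_cons big_nil => dsum.
  have da := dpos a (mem_head _ _).
  have db : 0 < d b by apply: dpos; rewrite !inE eqxx orbT.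
  by apply: realizable_pair => //; lia.
have [h [t [St angt]]] : exists h t, perm_eq S (h :: t) /\ pairwise (angle_lt p 1 h) t.
  by apply: angular_order => //; apply: contraTneq gt_S2 => ->.
suff: realizable p (h :: t) d by apply: realizable_ext => x; rewrite (perm_mem St).
have uht : uniq (h :: t) by rewrite -(perm_uniq St).
have sS : size S = (size t).+1 by rewrite (perm_size St).
have dpos' : {in h :: t, forall x, 0 < d x} by move=> x; rewrite -(perm_mem St); apply: dpos.
have dsum' : \sum_(x <- h :: t) d x + 2 = 2 * (size t).+1 by rewrite -(perm_big _ St) -sS.
have IHt S' d' : uniq S' -> 2 <= size S' <= size t -> {in S', forall x, 0 < d' x} ->
    \sum_(x <- S') d' x + 2 = 2 * size S' -> realizable p S' d'.
  by move=> uS' /andP[S'2 le_S't]; apply: IH => //; lia.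
case: (leqP 2 (d h)) => [dh2|dh1].
  exact: (realizable_fan_apex IHt (leqnn _) uht angt dh2 dpos' dsum').
have dh : d h = 1 by have := dpos' h (mem_head _ _); lia.
have t2 : 2 <= size t by lia.
exact: (realizable_fan_leaf IHt (leqnn _) t2 uht angt dh dpos' dsum').
Qed.

Theorem non_crossing_spanning_tree d : 2 <= n -> (forall x, 0 < d x) ->
  \sum_x d x + 2 = 2 * n ->
  exists e, [/\ is_tree e, non_crossing p e & forall x, deg e x = d x].
Proof.
move=> n2 dpos dsum.
have x0 : 'I_n by exists 0; lia.
have R_n : realizable p (enum 'I_n) d.
  by apply: realizable_degrees; rewrite ?enum_uniq ?size_enum_ord ?big_enum.
have [e [T N D]] := R_n x0 (mem_enum _ x0).
exists e; split=> //; first exact: rooted_tree_spanning T (mem_enum _).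
by move=> x; apply: D; rewrite mem_enum.
Qed.
End DegreeSequences.

Theorem corollary2 (R : realType) (k n : nat) (p : 'I_n -> R * R)
    (red : 'I_n -> bool) :
  (2 <= k)%N ->
  injective p ->
  no_three_collinear p ->
  (2 <= #|[set x | ~~ red x]|)%N ->
  (#|[set x | ~~ red x]| <= (k - 2) * #|[set x | red x]| + 2)%N ->
  exists e : rel 'I_n,
    [/\ is_tree e, non_crossing p e,
        (forall x, (deg e x == 1)%N = ~~ red x),
        (forall x, (deg e x <= k)%N)
      & (#|[set x | ~~ red x]| = (k - 2) * #|[set x | red x]| + 2)%N ->
        forall x, red x -> deg e x = k].
Proof.
move=> k2 p_inj p_gen B2 Ble.
set A := [set x | red x] in Ble *; set B := [set x | ~~ red x] in B2 Ble *.
have cardAB : #|A| + #|B| = n.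
  have -> : B = ~: A by apply/setP=> x; rewrite !inE.
  by rewrite cardsC card_ord.
have [g [gk gA]] : exists g, (forall x, g x <= k - 2) /\ \sum_(x <- enum A) g x = #|B| - 2.
  by apply: bounded_summands_exist; rewrite ?enum_uniq // -cardE; lia.
pose d x := if red x then g x + 2 else 1.
have sum_d : \sum_x d x = \sum_(x in A) g x + #|A| * 2 + #|B|.
  rewrite -sum_nat_const -big_split -sum1_card [LHS](bigID (mem A)) /=.
  by congr (_ + _); apply: eq_big => x; rewrite ?inE /d //; case: (red x).
have n2 : 2 <= n by lia.
have dpos x : 0 < d x by rewrite /d; case: (red x); rewrite ?addn2.
have dsum : \sum_x d x + 2 = 2 * n by rewrite sum_d -big_enum gA; lia.
have [e [T N D]] := non_crossing_spanning_tree p_inj p_gen n2 dpos dsum.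
exists e; split=> // [x|x|B_max x rx]; rewrite D /d.
- by case: (red x); rewrite ?addn2.
- by case: (red x); [have := gk x|]; lia.
have g_max : \sum_(x <- enum A) g x = (k - 2) * size (enum A) by rewrite gA -cardE; lia.
by rewrite rx (bounded_summands_eq gk g_max) ?mem_enum ?inE //; lia.
Qed.
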